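(* For $p\in(0,1)$ let $X_p$ be a geometric random variable with $P\{X_p=k\}=p(1-p)^k$, $k=0,1,2,\dots$. Then $$\inf_{p\in(0,1)}P\left\{|X_p-E[X_p]|\le\sqrt{\mathrm{Var}(X_p)}\right\}=\inf_{p\in(0,1)}P\left\{|X_p-E[X_p]|<\sqrt{\mathrm{Var}(X_p)}\right\}=\frac34.$$ *)

From Stdlib Require Import Reals.
From Coquelicot Require Import Coquelicot.
Open Scope R_scope.

Definition geom_pmf (p : R) (k : nat) : R := p * (1 - p) ^ k.

Definition geom_mean (p : R) : R := Series (fun k => INR k * geom_pmf p k).

Definition geom_var (p : R) : R :=
  Series (fun k => (INR k - geom_mean p) ^ 2 * geom_pmf p k).

Definition geom_prob_le (p : R) : R :=
  Series (fun k => if Rle_dec (Rabs (INR k - geom_mean p)) (sqrt (geom_var p))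
                   then geom_pmf p k else 0).

Definition geom_prob_lt (p : R) : R :=
  Series (fun k => if Rlt_dec (Rabs (INR k - geom_mean p)) (sqrt (geom_var p))
                   then geom_pmf p k else 0).

From Stdlib Require Import Reals Lra Lia.
From Coquelicot Require Import Coquelicot.
Open Scope R_scope.

(* Mean (1-p)/p and variance (1-p)/p^2 follow from the first-step identity
   E f(X) = p f(0) + (1-p) E f(X+1).  With t = sqrt(1-p) the interval
   [mu - sigma, mu + sigma] is [-t/(1+t), t/(1-t)], so the two events are
   {X < t/(1-t)} and {X <= t/(1-t)}.  If N is the least integer >= t/(1-t),
   then t <= N/(N+1), and (N/(N+1))^N <= 1/2 by Bernoulli's inequality, so
   P{X < N} = 1 - t^(2N) >= 3/4.  For p >= 3/4 we have t/(1-t) <= 1, with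
   equality only at p = 3/4; hence P{|X - mu| < sigma} = P{X = 0} = p for
   p >= 3/4 and P{|X - mu| <= sigma} = p for p > 3/4. *)

Lemma Series_zero : Series (fun _ => 0) = 0.
Proof.
  rewrite (Series_ext _ (fun n => 0 * (fun _ => 0) n)) by (intros; ring).
  rewrite Series_scal_l. ring.
Qed.

Lemma Series_eq_head (a : nat -> R) :
  ex_series a -> (forall k, a (S k) = 0) -> Series a = a O.
Proof.
  intros Hex Ha. rewrite Series_incr_1 by exact Hex.
  rewrite (Series_ext _ (fun _ => 0)) by exact Ha.
  rewrite Series_zero. ring.
Qed.

Lemma is_lim_seq_inv_succ : is_lim_seq (fun n => / (INR n + 1)) 0.
Proof.
  replace (Finite 0) with (Rbar_inv p_infty) by reflexivity.
  apply is_lim_seq_inv; [|discriminate].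
  eapply is_lim_seq_plus; [apply is_lim_seq_INR | apply is_lim_seq_const | reflexivity].
Qed.

Lemma is_lim_seq_pow_one_plus_inv_succ (m : nat) :
  is_lim_seq (fun n => (1 + / (INR n + 1)) ^ m) 1.
Proof.
  assert (Hbase : is_lim_seq (fun n => 1 + / (INR n + 1)) (1 + 0)).
  { apply is_lim_seq_plus'; [apply is_lim_seq_const | apply is_lim_seq_inv_succ]. }
  rewrite Rplus_0_r in Hbase.
  induction m as [|m IH].
  - apply is_lim_seq_const.
  - replace (Finite 1) with (Finite (1 * 1)) by (f_equal; ring).
    apply is_lim_seq_mult'; assumption.
Qed.

Lemma ex_series_pow_succ_mul_geom (m : nat) (q : R) :
  0 < q < 1 -> ex_series (fun n => (INR n + 1) ^ m * q ^ n).
Proof.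
  intros Hq.
  set (a := fun n => (INR n + 1) ^ m * q ^ n).
  assert (Ha : forall n, 0 < a n).
  { intros n. pose proof (pos_INR n).
    apply Rmult_lt_0_compat; apply pow_lt; lra. }
  assert (Hratio : forall n, a (S n) / a n = q * (1 + / (INR n + 1)) ^ m).
  { intros n. pose proof (pos_INR n). pose proof (Ha n).
    unfold a in *. rewrite S_INR.
    replace (INR n + 1 + 1) with ((1 + / (INR n + 1)) * (INR n + 1)) by (field; lra).
    rewrite Rpow_mult_distr. simpl (q ^ S n). field.
    split; apply pow_nonzero; lra. }
  apply ex_series_Rabs, ex_series_DAlembert with (k := q); [lra | |].
  - intros n. apply Rgt_not_eq, Ha.
  - apply is_lim_seq_ext with (fun n => q * (1 + / (INR n + 1)) ^ m).
    + intros n. rewrite Hratio, Rabs_pos_eq; [reflexivity|].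
      rewrite <- Hratio. left. apply Rdiv_lt_0_compat; apply Ha.
    + replace (Finite q) with (Finite (q * 1)) by (f_equal; ring).
      apply is_lim_seq_mult'; [apply is_lim_seq_const | apply is_lim_seq_pow_one_plus_inv_succ].
Qed.

Lemma Rabs_sub_lt_iff (x m s : R) :
  0 <= x -> m - s < 0 -> (Rabs (x - m) < s <-> x < m + s).
Proof. intros Hx Hms. rewrite Rabs_lt_between'. lra. Qed.

Lemma Rabs_sub_le_iff (x m s : R) :
  0 <= x -> m - s < 0 -> (Rabs (x - m) <= s <-> x <= m + s).
Proof. intros Hx Hms. rewrite Rabs_le_between'. lra. Qed.

Lemma exists_nat_ceil (x : R) :
  0 <= x -> exists N, x <= INR N /\ forall k, (k < N)%nat -> INR k < x.
Proof.
  intros Hx. destruct (nfloor_ex x Hx) as [n [Hnx Hxn]].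
  destruct (Req_dec (INR n) x) as [Heq|Hneq].
  - exists n. split; [lra|].
    intros k Hk. apply lt_INR in Hk. lra.
  - exists (S n). rewrite S_INR. split; [lra|].
    intros k Hk. assert (Hkn : (k <= n)%nat) by lia. apply le_INR in Hkn. lra.
Qed.

Lemma pow_ratio_succ_le_half (N : nat) :
  (0 < N)%nat -> (INR N / (INR N + 1)) ^ N <= 1 / 2.
Proof.
  intros HN. assert (HNpos : 0 < INR N) by (apply lt_0_INR; exact HN).
  replace (INR N / (INR N + 1)) with (/ (1 + / INR N)) by (field; lra).
  rewrite pow_inv.
  assert (Hbern : 2 <= (1 + / INR N) ^ N).
  { pose proof (Rle_pow_lin (/ INR N) N (Rlt_le _ _ (Rinv_0_lt_compat _ HNpos))) as H.
    rewrite Rinv_r in H; lra. }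
  replace (1 / 2) with (/ 2) by field.
  apply Rinv_le_contravar; lra.
Qed.

Lemma sqrt_open_unit (q : R) :
  0 < q < 1 -> 0 < sqrt q < 1 /\ sqrt q * sqrt q = q.
Proof.
  intros Hq. assert (Hsq : sqrt q * sqrt q = q) by (apply sqrt_sqrt; lra).
  assert (Hpos : 0 < sqrt q) by (apply sqrt_lt_R0; lra).
  repeat split; nra.
Qed.

Section Geometric.

Variable p : R.
Hypothesis Hp : 0 < p < 1.

Lemma geom_pmf_ge0 (k : nat) : 0 <= geom_pmf p k.
Proof. apply Rmult_le_pos; [lra | apply pow_le; lra]. Qed.

Lemma geom_pmf_succ (k : nat) : geom_pmf p (S k) = (1 - p) * geom_pmf p k.
Proof. unfold geom_pmf. simpl. ring. Qed.

Lemma Series_geom_pmf : Series (geom_pmf p) = 1.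
Proof.
  unfold geom_pmf. rewrite Series_scal_l, Series_geom by (rewrite Rabs_pos_eq; lra).
  field. lra.
Qed.

Lemma ex_series_pow_mul_geom_pmf (m : nat) :
  ex_series (fun k => INR k ^ m * geom_pmf p k).
Proof.
  apply (@ex_series_le R_AbsRing R_CompleteNormedModule _ (fun k => p * ((INR k + 1) ^ m * (1 - p) ^ k))).
  - intros k. pose proof (pos_INR k). unfold geom_pmf.
    assert (Hk : INR k ^ m <= (INR k + 1) ^ m) by (apply pow_incr; lra).
    assert (Hq : 0 <= (1 - p) ^ k) by (apply pow_le; lra).
    assert (Hkm : 0 <= INR k ^ m) by (apply pow_le; lra).
    change (norm ?x) with (Rabs x).
    rewrite Rabs_pos_eq by (apply Rmult_le_pos; [lra | apply Rmult_le_pos; lra]).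
    replace (INR k ^ m * (p * (1 - p) ^ k)) with (p * (INR k ^ m * (1 - p) ^ k)) by ring.
    apply Rmult_le_compat_l; [lra|]. apply Rmult_le_compat_r; lra.
  - apply (ex_series_scal_l p (fun k => (INR k + 1) ^ m * (1 - p) ^ k)).
    apply ex_series_pow_succ_mul_geom. lra.
Qed.

Lemma Series_geom_pmf_shift (f : nat -> R) :
  ex_series (fun k => f k * geom_pmf p k) ->
  Series (fun k => f k * geom_pmf p k) =
  p * f O + (1 - p) * Series (fun k => f (S k) * geom_pmf p k).
Proof.
  intros Hex. rewrite Series_incr_1 by exact Hex.
  rewrite <- Series_scal_l. unfold geom_pmf at 1. f_equal.
  - simpl. ring.
  - apply Series_ext. intros k. rewrite geom_pmf_succ. ring.
Qed.

Lemma Series_geom_quadratic (a b c : R) :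
  Series (fun k => (a * INR k ^ 2 + b * INR k + c) * geom_pmf p k) =
  a * Series (fun k => INR k ^ 2 * geom_pmf p k) + b * geom_mean p + c.
Proof.
  rewrite (Series_ext _ (fun k => (a * (INR k ^ 2 * geom_pmf p k)
      + b * (INR k ^ 1 * geom_pmf p k)) + c * (INR k ^ 0 * geom_pmf p k)))
    by (intros; ring).
  pose proof (ex_series_pow_mul_geom_pmf 0) as H0.
  pose proof (ex_series_pow_mul_geom_pmf 1) as H1.
  pose proof (ex_series_pow_mul_geom_pmf 2) as H2.
  rewrite Series_plus, Series_plus, !Series_scal_l;
    try apply (ex_series_plus (V := R_NormedModule));
    try apply (ex_series_scal_l (V := R_NormedModule)); try assumption.
  unfold geom_mean.
  rewrite (Series_ext (fun k => INR k ^ 0 * _) (geom_pmf p)) by (intros; ring).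
  rewrite (Series_ext (fun k => INR k ^ 1 * _) (fun k => INR k * geom_pmf p k)) by (intros; ring).
  rewrite Series_geom_pmf. ring.
Qed.

Lemma geom_mean_eq : geom_mean p = (1 - p) / p.
Proof.
  assert (Hex : ex_series (fun k => INR k * geom_pmf p k)).
  { apply (@ex_series_ext R_AbsRing R_NormedModule (fun k => INR k ^ 1 * geom_pmf p k)); [intros; simpl; ring|].
    apply ex_series_pow_mul_geom_pmf. }
  pose proof (Series_geom_pmf_shift INR Hex) as Hshift.
  rewrite (Series_ext (fun k => INR (S k) * _)
      (fun k => (0 * INR k ^ 2 + 1 * INR k + 1) * geom_pmf p k)) in Hshift
    by (intros; rewrite S_INR; ring).
  rewrite Series_geom_quadratic in Hshift. fold (geom_mean p) in Hshift.
  assert (Hpm : p * geom_mean p = 1 - p) by (simpl in Hshift; nra).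
  apply (Rmult_eq_reg_l p); [rewrite Hpm; field |]; lra.
Qed.

Lemma geom_second_moment :
  Series (fun k => INR k ^ 2 * geom_pmf p k) = (1 - p) * (2 - p) / p ^ 2.
Proof.
  pose proof (Series_geom_pmf_shift (fun k => INR k ^ 2)
    (ex_series_pow_mul_geom_pmf 2)) as Hshift.
  rewrite (Series_ext (fun k => INR (S k) ^ 2 * _)
      (fun k => (1 * INR k ^ 2 + 2 * INR k + 1) * geom_pmf p k)) in Hshift
    by (intros; rewrite S_INR; ring).
  rewrite Series_geom_quadratic, geom_mean_eq in Hshift.
  set (M2 := Series (fun k => INR k ^ 2 * geom_pmf p k)) in *.
  assert (Hpm : p * M2 = (1 - p) * (2 * ((1 - p) / p) + 1)) by (simpl in Hshift; nra).
  apply (Rmult_eq_reg_l p); [rewrite Hpm; field |]; lra.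
Qed.

Lemma geom_var_eq : geom_var p = (1 - p) / p ^ 2.
Proof.
  unfold geom_var.
  rewrite (Series_ext _ (fun k => (1 * INR k ^ 2 + (- 2 * geom_mean p) * INR k
      + geom_mean p ^ 2) * geom_pmf p k)) by (intros; ring).
  rewrite Series_geom_quadratic, geom_second_moment, geom_mean_eq.
  field. lra.
Qed.

Lemma geom_sd_eq : sqrt (geom_var p) = sqrt (1 - p) / p.
Proof.
  rewrite geom_var_eq.
  pose proof (sqrt_sqrt (1 - p) ltac:(lra)) as Hsq.
  rewrite <- Hsq at 1.
  replace (sqrt (1 - p) * sqrt (1 - p) / p ^ 2) with ((sqrt (1 - p) / p) ^ 2)
    by (field; lra).
  apply sqrt_pow2, Rdiv_le_0_compat; [apply sqrt_pos | lra].
Qed.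

Lemma geom_mean_sub_sd_lt0 : geom_mean p - sqrt (geom_var p) < 0.
Proof.
  rewrite geom_mean_eq, geom_sd_eq.
  destruct (sqrt_open_unit (1 - p)) as [Ht Hsq]; [lra|].
  unfold Rdiv. rewrite <- Rmult_minus_distr_r.
  apply Rmult_neg_pos; [nra | apply Rinv_0_lt_compat; lra].
Qed.

Lemma geom_mean_add_sd :
  geom_mean p + sqrt (geom_var p) = sqrt (1 - p) / (1 - sqrt (1 - p)).
Proof.
  rewrite geom_mean_eq, geom_sd_eq.
  destruct (sqrt_open_unit (1 - p)) as [Ht Hsq]; [lra|].
  set (t := sqrt (1 - p)) in *.
  rewrite <- Hsq. replace p with (1 - t * t) by lra.
  field. split; nra.
Qed.

Lemma geom_dev_lt_sd_iff (k : nat) :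
  Rabs (INR k - geom_mean p) < sqrt (geom_var p) <->
  INR k < sqrt (1 - p) / (1 - sqrt (1 - p)).
Proof.
  rewrite <- geom_mean_add_sd.
  apply Rabs_sub_lt_iff; [apply pos_INR | apply geom_mean_sub_sd_lt0].
Qed.

Lemma geom_dev_le_sd_iff (k : nat) :
  Rabs (INR k - geom_mean p) <= sqrt (geom_var p) <->
  INR k <= sqrt (1 - p) / (1 - sqrt (1 - p)).
Proof.
  rewrite <- geom_mean_add_sd.
  apply Rabs_sub_le_iff; [apply pos_INR | apply geom_mean_sub_sd_lt0].
Qed.

Lemma sum_f_R0_geom_pmf (n : nat) : sum_f_R0 (geom_pmf p) n = 1 - (1 - p) ^ S n.
Proof.
  induction n as [|n IH]; simpl; unfold geom_pmf in *; simpl in *.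
  - ring.
  - rewrite IH. ring.
Qed.

Section Indicator.

Variable P : nat -> Prop.
Variable P_dec : forall k, {P k} + {~ P k}.

Let ind (k : nat) : R := if P_dec k then geom_pmf p k else 0.

Lemma geom_pmf_indicator_bounds (k : nat) : 0 <= ind k <= geom_pmf p k.
Proof. unfold ind. pose proof (geom_pmf_ge0 k). destruct (P_dec k); lra. Qed.

Lemma ex_series_geom_pmf_indicator : ex_series ind.
Proof.
  apply (@ex_series_le R_AbsRing R_CompleteNormedModule _ (fun k => INR k ^ 0 * geom_pmf p k)).
  - intros k. change (norm ?x) with (Rabs x).
    pose proof (geom_pmf_indicator_bounds k).
    rewrite Rabs_pos_eq by lra. simpl. lra.
  - apply ex_series_pow_mul_geom_pmf.
Qed.

Lemma Series_geom_pmf_indicator_ge (N : nat) : (0 < N)%nat ->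
  (forall k, (k < N)%nat -> P k) -> 1 - (1 - p) ^ N <= Series ind.
Proof.
  intros HN Hhead.
  rewrite (Series_incr_n ind N HN ex_series_geom_pmf_indicator).
  rewrite (sum_eq ind (geom_pmf p)).
  2:{ intros i Hi. unfold ind. destruct (P_dec i) as [|Hnot]; [reflexivity|].
      exfalso. apply Hnot, Hhead. lia. }
  rewrite sum_f_R0_geom_pmf. replace (S (pred N)) with N by lia.
  assert (Htail : 0 <= Series (fun k => ind (N + k)%nat)).
  { rewrite <- Series_zero. apply Series_le.
    - intros k. pose proof (geom_pmf_indicator_bounds (N + k)). lra.
    - apply ex_series_incr_n, ex_series_geom_pmf_indicator. }
  lra.
Qed.

Lemma Series_geom_pmf_indicator_head :
  P O -> (forall k, ~ P (S k)) -> Series ind = p.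
Proof.
  intros H0 HS. rewrite Series_eq_head.
  - unfold ind. destruct (P_dec O) as [|Hnot]; [|contradiction].
    unfold geom_pmf. simpl. ring.
  - apply ex_series_geom_pmf_indicator.
  - intros k. unfold ind. destruct (P_dec (S k)) as [HP|]; [|reflexivity].
    exfalso. exact (HS k HP).
Qed.

End Indicator.

Lemma geom_prob_lt_le : geom_prob_lt p <= geom_prob_le p.
Proof.
  apply Series_le; [|apply ex_series_geom_pmf_indicator].
  intros k. pose proof (geom_pmf_ge0 k). destruct Rlt_dec, Rle_dec; lra.
Qed.

Lemma geom_prob_lt_ge : 3 / 4 <= geom_prob_lt p.
Proof.
  destruct (sqrt_open_unit (1 - p)) as [Ht Hsq]; [lra|].
  pose proof geom_dev_lt_sd_iff as Hiff.
  set (t := sqrt (1 - p)) in *.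
  destruct (exists_nat_ceil (t / (1 - t))) as [N [HxN Hbelow]].
  { apply Rdiv_le_0_compat; lra. }
  assert (HtN1 : t <= INR N * (1 - t)).
  { apply (Rmult_le_compat_r (1 - t)) in HxN; [|lra].
    replace (t / (1 - t) * (1 - t)) with t in HxN by (field; lra). exact HxN. }
  assert (HN : (0 < N)%nat) by (destruct N; [simpl in HtN1; lra | lia]).
  assert (HtN : t ^ N <= 1 / 2).
  { eapply Rle_trans; [|apply (pow_ratio_succ_le_half N HN)].
    apply pow_incr. split; [lra|].
    apply (Rmult_le_reg_r (INR N + 1)); [pose proof (pos_INR N); lra|].
    field_simplify; [lra | pose proof (pos_INR N); lra]. }
  assert (HqN : (1 - p) ^ N <= 1 / 4).
  { rewrite <- Hsq, Rpow_mult_distr. pose proof (pow_le t N ltac:(lra)). nra. }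
  eapply Rle_trans; [|apply (Series_geom_pmf_indicator_ge _ _ N HN)]; [lra|].
  intros k Hk. apply Hiff, Hbelow, Hk.
Qed.

Lemma geom_prob_lt_eq : 3 / 4 <= p -> geom_prob_lt p = p.
Proof.
  intros Hp34.
  destruct (sqrt_open_unit (1 - p)) as [Ht Hsq]; [lra|].
  pose proof geom_dev_lt_sd_iff as Hiff.
  set (t := sqrt (1 - p)) in *.
  assert (Hx1 : t / (1 - t) <= 1).
  { apply (Rmult_le_reg_r (1 - t)); [lra|]. field_simplify; [nra | lra]. }
  apply Series_geom_pmf_indicator_head.
  - apply Hiff. simpl. apply Rdiv_lt_0_compat; lra.
  - intros k Hin. apply Hiff in Hin. rewrite S_INR in Hin. pose proof (pos_INR k). lra.
Qed.

Lemma geom_prob_le_eq : 3 / 4 < p -> geom_prob_le p = p.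
Proof.
  intros Hp34.
  destruct (sqrt_open_unit (1 - p)) as [Ht Hsq]; [lra|].
  pose proof geom_dev_le_sd_iff as Hiff.
  set (t := sqrt (1 - p)) in *.
  assert (Hx1 : t / (1 - t) < 1).
  { apply (Rmult_lt_reg_r (1 - t)); [lra|]. field_simplify; [nra | lra]. }
  apply Series_geom_pmf_indicator_head.
  - apply Hiff. simpl. apply Rdiv_le_0_compat; lra.
  - intros k Hin. apply Hiff in Hin. rewrite S_INR in Hin. pose proof (pos_INR k). lra.
Qed.

End Geometric.

Lemma is_glb_Rbar_of_approx (E : R -> Prop) (l : R) :
  (forall x, E x -> l <= x) ->
  (forall b, l < b -> exists x, E x /\ x < b) ->
  is_glb_Rbar E l.
Proof.
  intros Hlb Happrox. split.
  - intros x Ex. exact (Hlb x Ex).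
  - intros [b| |] Hb; simpl; [| |trivial].
    + destruct (Rle_dec b l) as [|Hbl]; [assumption|]. exfalso.
      destruct (Happrox b) as [x [Ex Hxb]]; [lra|].
      specialize (Hb x Ex). simpl in Hb. lra.
    + destruct (Happrox (l + 1)) as [x [Ex _]]; [lra|].
      exact (Hb x Ex).
Qed.

Theorem proposition3p1 :
  is_glb_Rbar (fun x => exists p, 0 < p < 1 /\ x = geom_prob_le p) (Finite (3 / 4)) /\
  is_glb_Rbar (fun x => exists p, 0 < p < 1 /\ x = geom_prob_lt p) (Finite (3 / 4)).
Proof.
  split; apply is_glb_Rbar_of_approx.
  - intros x [p [Hp ->]].
    apply (Rle_trans _ (geom_prob_lt p)); [apply geom_prob_lt_ge | apply geom_prob_lt_le];
      exact Hp.
  - intros b Hb.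
    set (p := (3 / 4 + Rmin b 1) / 2).
    pose proof (Rmin_l b 1). pose proof (Rmin_r b 1).
    assert (Hmin : 3 / 4 < Rmin b 1) by (apply Rmin_glb_lt; lra).
    exists p. split; [|unfold p; lra].
    exists p. split; [unfold p; lra|]. symmetry. apply geom_prob_le_eq; unfold p; lra.
  - intros x [p [Hp ->]]. apply geom_prob_lt_ge, Hp.
  - intros b Hb. exists (3 / 4). split; [|exact Hb].
    exists (3 / 4). split; [lra|]. symmetry. apply geom_prob_lt_eq; lra.
Qed.
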